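(* For all instances $A_1,\dots,A_n$ (over a common schema), the class $\bigcup_{1\le i\le n}[A_i]_{\leftrightarrow}$ admits a left query algorithm over $\mathbb{B}$ (equivalently, is FO-definable) if and only if each $[A_i]_{\leftrightarrow}$, $1\le i\le n$, admits a left query algorithm over $\mathbb{B}$ (equivalently, is FO-definable).
   Context: A schema is a finite set of relation symbols, each with a positive arity. An instance $A$ over a schema $\sigma$ assigns to each $R\in\sigma$ of arity $r$ a finite $r$-ary relation $R^A$; $\mathrm{adom}(A)$ is the set of elements occurring in its facts. A homomorphism $h:A\to B$ is a map $h:\mathrm{adom}(A)\to\mathrm{adom}(B)$ preserving every relation; we write $A\to B$ if one exists. $A,B$ are homomorphically equivalent if $A\to B$ and $B\to A$; $[A]_{\leftrightarrow}$ is the class of all instances homomorphically equivalent to $A$. $\hom_{\mathbb{B}}(A,B)=1$ if $A\to B$ and $0$ otherwise; for $\mathcal{F}=\{F_1,\dots,F_k\}$, $\hom_{\mathbb{B}}(\mathcal{F},A)=(\hom_{\mathbb{B}}(F_i,A))_{i\le k}$. A left $k$-query algorithm over $\mathbb{B}$ for a class $\mathcal{C}$ (closed under isomorphism) is a pair $(\mathcal{F},X)$ with $|\mathcal{F}|=k$ and $X\subseteq\{0,1\}^k$ such that for every instance $D$: $D\in\mathcal{C}$ iff $\hom_{\mathbb{B}}(\mathcal{F},D)\in X$; $\mathcal{C}$ admits one if one exists for some $k>0$. FO-definable means equal to the class of instances satisfying some first-order sentence under active-domain semantics. *)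

From mathcomp Require Import all_boot.
Set Implicit Arguments. Unset Strict Implicit. Unset Printing Implicit Defensive.

(* An instance assigns to each symbol R a finite (ar R)-ary relation, given as a
   finite list of tuples; elements are drawn from nat (every finite instance is
   isomorphic to one of this form, and all classes considered are closed under
   isomorphism). *)
Definition instance (S : finType) (ar : S -> nat) :=
  forall R : S, seq ((ar R).-tuple nat).

Section Defs.
Variables (S : finType) (ar : S -> nat).

Definition fact (A : instance ar) (R : S) (t : (ar R).-tuple nat) : Prop :=
  t \in A R.

Definition adom (A : instance ar) : pred nat :=
  fun a => [exists R : S, has (fun t : (ar R).-tuple nat => a \in val t) (A R)].

(* A map nat -> nat
   preserving facts restricts to a map adom A -> adom B (images of facts are
   facts of B), and any map adom A -> adom B extends to nat. *)
Definition hom (A B : instance ar) : Prop :=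
  exists h : nat -> nat,
    forall (R : S) (t : (ar R).-tuple nat), fact A t -> fact B (map_tuple h t).

Definition hom_equiv (A B : instance ar) : Prop := hom A B /\ hom B A.

Definition hom_class (A : instance ar) : instance ar -> Prop :=
  fun D => hom_equiv A D.

Definition left_query_alg (k : nat) (F : 'I_k -> instance ar)
    (X : {set {ffun 'I_k -> bool}}) (C : instance ar -> Prop) : Prop :=
  forall D : instance ar,
    C D <-> exists v : {ffun 'I_k -> bool},
              v \in X /\ forall i : 'I_k, (v i = true <-> hom (F i) D).

Definition admits_left_query_alg (C : instance ar -> Prop) : Prop :=
  exists k : nat, 0 < k /\
    exists (F : 'I_k -> instance ar) (X : {set {ffun 'I_k -> bool}}),
      left_query_alg F X C.

End Defs.

From mathcomp Require Import all_boot.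
From Stdlib Require Import ClassicalEpsilon.
Set Implicit Arguments. Unset Strict Implicit.

(* A left query algorithm (F, X) for C says that membership in C depends only
   on the Boolean "hom profile" D |-> (hom (F j) D)_j of D.  Classes with such
   algorithms are closed under conjunction and disjunction (concatenate the
   query families and combine the accepting sets), hence under finite unions;
   this gives the "if" direction.  For the "only if" direction, fix i and
   query with the family A itself: [A_i] consists exactly of those members
   of the union whose profile w.r.t. A equals that of A_i.  Having a given
   profile is trivially decided by (A, {profile of A_i}), so [A_i] is the
   intersection of two classes admitting left query algorithms.
   The argument uses only that -> is a preorder. *)

Definition holds (P : Prop) : bool :=
  if excluded_middle_informative P then true else false.

Lemma holdsP (P : Prop) : holds P = true <-> P.
Proof. by rewrite /holds; case: excluded_middle_informative. Qed.

Lemma holds_eq (P Q : Prop) : holds P = holds Q <-> (P <-> Q).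
Proof.
split=> [E | E]; last by apply/idP/idP => /holdsP HP; apply/holdsP/E.
by split=> HP; apply/holdsP; [rewrite -E | rewrite E]; apply/holdsP.
Qed.

Section LeftQueryAlgorithms.
Variables (S : finType) (ar : S -> nat).

Lemma hom_refl (A : instance ar) : hom A A.
Proof.
exists id => R t At; suff -> : map_tuple id t = t by [].
by apply: val_inj; rewrite /= map_id.
Qed.

Lemma hom_trans (A B C : instance ar) : hom A B -> hom B C -> hom A C.
Proof.
move=> [g Hg] [h Hh]; exists (h \o g) => R t At.
suff -> : map_tuple (h \o g) t = map_tuple h (map_tuple g t) by apply/Hh/Hg.
by apply: val_inj; rewrite /= map_comp.
Qed.

Definition profile k (F : 'I_k -> instance ar) (D : instance ar) : {ffun 'I_k -> bool} :=
  [ffun j => holds (hom (F j) D)].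

Lemma profileE k (F : 'I_k -> instance ar) (D : instance ar) (j : 'I_k) :
  profile F D j = true <-> hom (F j) D.
Proof. by rewrite ffunE holdsP. Qed.

Lemma eq_profile k (F : 'I_k -> instance ar) (D B : instance ar) :
  profile F D = profile F B <-> forall j, hom (F j) D <-> hom (F j) B.
Proof.
split=> [/ffunP E j | E]; last by apply/ffunP => j; rewrite !ffunE; apply/holds_eq.
by move: (E j); rewrite !ffunE => /holds_eq.
Qed.

Lemma left_query_algP k (F : 'I_k -> instance ar) X (C : instance ar -> Prop) :
  left_query_alg F X C <-> forall D, C D <-> profile F D \in X.
Proof.
have profile_uniq D (v : {ffun 'I_k -> bool}) :
    (forall j, v j = true <-> hom (F j) D) -> v = profile F D.
  move=> Hv; apply/ffunP => j.
  by apply/idP/idP => [/Hv /profileE | /profileE /Hv].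
have profile_witness D : profile F D \in X ->
    exists v, v \in X /\ forall j, v j = true <-> hom (F j) D.
  by move=> XD; exists (profile F D); split=> // j; apply: profileE.
split=> H D; rewrite H; split.
- by move=> [v [Xv Hv]]; rewrite -(profile_uniq _ _ Hv).
- exact: profile_witness.
- exact: profile_witness.
- by move=> [v [Xv Hv]]; rewrite -(profile_uniq _ _ Hv).
Qed.

Lemma admits_ext (C C' : instance ar -> Prop) :
  (forall D, C D <-> C' D) -> admits_left_query_alg C -> admits_left_query_alg C'.
Proof.
move=> E [k [k_gt0 [F [X H]]]]; exists k; split=> //; exists F, X => D.
by rewrite -E.
Qed.

Definition cat_family k1 k2 (F1 : 'I_k1 -> instance ar) (F2 : 'I_k2 -> instance ar)
    (j : 'I_(k1 + k2)) : instance ar :=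
  match split j with inl a => F1 a | inr b => F2 b end.

Definition lpart k1 k2 (w : {ffun 'I_(k1 + k2) -> bool}) : {ffun 'I_k1 -> bool} :=
  [ffun a => w (unsplit (inl a))].
Definition rpart k1 k2 (w : {ffun 'I_(k1 + k2) -> bool}) : {ffun 'I_k2 -> bool} :=
  [ffun b => w (unsplit (inr b))].

Lemma lpart_profile k1 k2 F1 F2 D : lpart (profile (@cat_family k1 k2 F1 F2) D) = profile F1 D.
Proof. by apply/ffunP => a; rewrite !ffunE /cat_family unsplitK. Qed.

Lemma rpart_profile k1 k2 F1 F2 D : rpart (profile (@cat_family k1 k2 F1 F2) D) = profile F2 D.
Proof. by apply/ffunP => b; rewrite !ffunE /cat_family unsplitK. Qed.

Lemma admits_and (C1 C2 : instance ar -> Prop) :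
  admits_left_query_alg C1 -> admits_left_query_alg C2 ->
  admits_left_query_alg (fun D => C1 D /\ C2 D).
Proof.
move=> [k1 [k1_gt0 [F1 [X1 /left_query_algP H1]]]] [k2 [_ [F2 [X2 /left_query_algP H2]]]].
exists (k1 + k2); split; first by rewrite addn_gt0 k1_gt0.
exists (cat_family F1 F2), [set w | (lpart w \in X1) && (rpart w \in X2)].
apply/left_query_algP => D; rewrite inE lpart_profile rpart_profile H1 H2.
by split=> [[-> ->] | /andP].
Qed.

Lemma admits_or (C1 C2 : instance ar -> Prop) :
  admits_left_query_alg C1 -> admits_left_query_alg C2 ->
  admits_left_query_alg (fun D => C1 D \/ C2 D).
Proof.
move=> [k1 [k1_gt0 [F1 [X1 /left_query_algP H1]]]] [k2 [_ [F2 [X2 /left_query_algP H2]]]].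
exists (k1 + k2); split; first by rewrite addn_gt0 k1_gt0.
exists (cat_family F1 F2), [set w | (lpart w \in X1) || (rpart w \in X2)].
apply/left_query_algP => D; rewrite inE lpart_profile rpart_profile H1 H2.
by split=> [[-> | ->] | /orP]; rewrite ?orbT.
Qed.

Definition empty_instance : instance ar := fun _ => [::].

Lemma admits_false : admits_left_query_alg (fun _ : instance ar => False).
Proof.
exists 1; split=> //; exists (fun _ => empty_instance), set0.
by apply/left_query_algP => D; rewrite inE.
Qed.

Lemma admits_exists (I : finType) (C : I -> instance ar -> Prop) :
  (forall i, admits_left_query_alg (C i)) ->
  admits_left_query_alg (fun D => exists i, C i D).
Proof.
move=> HC; suff union_over (s : seq I) :
    admits_left_query_alg (fun D => exists2 i, i \in s & C i D).
  apply: admits_ext (union_over (enum I)) => D.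
  by split=> [[i _ Ci] | [i Ci]]; exists i; rewrite ?mem_enum.
elim: s => [|i s IHs].
  by apply: admits_ext admits_false => D; split=> // [[]].
apply: admits_ext (admits_or (HC i) IHs) => D; split.
- case=> [Ci | [j js Cj]]; first by exists i; rewrite ?inE ?eqxx.
  by exists j; rewrite // inE js orbT.
- by case=> j; rewrite inE => /orP[/eqP-> | js] Cj; [left | right; exists j].
Qed.

Lemma admits_same_profile k (F : 'I_k -> instance ar) (B : instance ar) :
  0 < k -> admits_left_query_alg (fun D => profile F D = profile F B).
Proof.
move=> k_gt0; exists k; split=> //; exists F, [set profile F B].
by apply/left_query_algP => D; rewrite inE; split=> [-> | /eqP].
Qed.

Lemma hom_class_in_union n (A : 'I_n -> instance ar) (i : 'I_n) (D : instance ar) :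
  hom_class (A i) D <->
  (exists k, hom_class (A k) D) /\ profile A D = profile A (A i).
Proof.
split.
- move=> [AD DA]; split; first by exists i; split.
  by apply/eq_profile => k; split=> Hk; [apply: hom_trans DA | apply: hom_trans AD].
- move=> [[k [AkD DAk]] /eq_profile same]; split; first by apply/same/hom_refl.
  by apply: hom_trans DAk _; apply/same.
Qed.

End LeftQueryAlgorithms.

Theorem mainTheorem7 (S : finType) (ar : S -> nat)
    (ar_pos : forall R : S, 0 < ar R)
    (n : nat) (A : 'I_n -> instance ar) :
  admits_left_query_alg (fun D : instance ar => exists i : 'I_n, hom_class (A i) D)
  <-> (forall i : 'I_n, admits_left_query_alg (hom_class (A i))).
Proof.
split; last exact: admits_exists.
move=> union_admits i; have n_gt0 : 0 < n by apply: leq_ltn_trans (ltn_ord i).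
apply: admits_ext (admits_and union_admits (admits_same_profile A (A i) n_gt0)) => D.
by rewrite hom_class_in_union.
Qed.
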